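(* The Galois structure $\Gamma=(\mathsf{PreOrdGrp},\mathsf{Mono(Ab)},F,U,\mathscr{E},\mathscr{Z})$ is admissible; that is, for every preordered group $B$, every object $X$ of $\mathsf{Mono(Ab)}$ and every regular epimorphism $\phi\colon X\to F(B)$ in $\mathsf{Mono(Ab)}$, the functor $F$ sends the pullback in $\mathsf{PreOrdGrp}$ of $U(\phi)$ along the unit $\eta_B\colon B\to UF(B)$ to a pullback in $\mathsf{Mono(Ab)}$.
   Context: A preordered group is a pair $(G,P_G)$ with $G$ an additively written group and $P_G\subseteq G$ a submonoid closed under conjugation; morphisms are group homomorphisms $f$ with $f(P_G)\subseteq P_H$. This is $\mathsf{PreOrdGrp}$; limits are computed componentwise. $\mathsf{Mono(Ab)}$ is the full subcategory of $(G,P_G)$ with $G$ abelian and $P_G$ a subgroup, $U$ its inclusion, and $F$ its left adjoint: $F(G,P_G)=(G/[G,G],\{x-y: x,y\in\eta_G(P_G)\})$, $\eta_G$ the abelianization quotient, unit induced by $\eta_G$; the counit of $F\dashv U$ is an isomorphism. $\mathscr E$ (resp. $\mathscr Z$) is the class of regular epimorphisms in $\mathsf{PreOrdGrp}$ (resp. $\mathsf{Mono(Ab)}$), i.e. morphisms $(f,\bar f)$ with $f$ and its restriction $\bar f$ to positive cones both surjective. A Galois structure $(\mathscr C,\mathscr F,F,U,\mathscr E,\mathscr Z)$ is admissible when for every $B$ the counit of the induced adjunction between $\mathscr E$-extensions of $B$ and $\mathscr Z$-extensions of $F(B)$ (right adjoint: pullback of $U(\phi)$ along $\eta_B$) is an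 isomorphism; when the counit of $F\dashv U$ is an isomorphism this is equivalent to the pullback-preservation condition in the claim. *)

From Stdlib Require Import ClassicalEpsilon.

Set Implicit Arguments.

(** Data of a preordered group: an additively written group with a
    distinguished subset (the positive cone).  The axioms are stated
    separately in [isPreOrdGrp]. *)
Record pgrp := PGrp {
  car :> Type;
  add : car -> car -> car;
  zero : car;
  opp : car -> car;
  pos : car -> Prop }.

Arguments add {p} _ _.
Arguments zero {p}.
Arguments opp {p} _.
Arguments pos {p} _.

Definition sub {G : pgrp} (x y : G) : G := add x (opp y).

Definition isPreOrdGrp (G : pgrp) : Prop :=
  (forall x y z : G, add x (add y z) = add (add x y) z) /\
  (forall x : G, add zero x = x) /\
  (forall x : G, add x zero = x) /\
  (forall x : G, add (opp x) x = zero) /\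
  (forall x : G, add x (opp x) = zero) /\
  pos (@zero G) /\
  (forall x y : G, pos x -> pos y -> pos (add x y)) /\
  (forall x p : G, pos p -> pos (add (add x p) (opp x))).

Definition isMonoAb (G : pgrp) : Prop :=
  isPreOrdGrp G /\
  (forall x y : G, add x y = add y x) /\
  (forall x : G, pos x -> pos (opp x)).

Definition hom {G H : pgrp} (f : G -> H) : Prop :=
  (forall x y : G, f (add x y) = add (f x) (f y)) /\
  (forall x : G, pos x -> pos (f x)).

(** Regular epimorphisms (classes E and Z): surjective, and surjective on
    positive cones. *)
Definition regepi {G H : pgrp} (f : G -> H) : Prop :=
  hom f /\
  (forall y : H, exists x : G, f x = y) /\
  (forall y : H, pos y -> exists x : G, pos x /\ f x = y).

Definition commsub {G : pgrp} (x : G) : Prop :=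
  forall S : G -> Prop,
    S zero ->
    (forall a b, S a -> S b -> S (sub a b)) ->
    (forall a b : G, S (sub (sub (add a b) a) b)) ->
    S x.

Definition abeq {G : pgrp} (x y : G) : Prop := commsub (sub x y).

(** The abelianization G/[G,G] as a type of equivalence classes. *)
Definition qcar (G : pgrp) : Type :=
  { S : G -> Prop | exists x : G, S = abeq x }.

Definition cls {G : pgrp} (x : G) : qcar G :=
  exist _ (abeq x) (ex_intro _ x eq_refl).

Definition repr {G : pgrp} (S : qcar G) : G :=
  proj1_sig (constructive_indefinite_description _ (proj2_sig S)).

Definition qadd {G : pgrp} (S T : qcar G) : qcar G := cls (add (repr S) (repr T)).
Definition qzero (G : pgrp) : qcar G := cls (@zero G).
Definition qopp {G : pgrp} (S : qcar G) : qcar G := cls (opp (repr S)).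

Definition qpos {G : pgrp} (S : qcar G) : Prop :=
  exists x y : G, pos x /\ pos y /\ S = qadd (cls x) (qopp (cls y)).

Definition Fobj (G : pgrp) : pgrp :=
  {| car := qcar G; add := qadd (G:=G); zero := qzero G; opp := qopp (G:=G);
     pos := qpos (G:=G) |}.

Definition eta (G : pgrp) : G -> Fobj G := cls (G:=G).

Definition Fmor {G H : pgrp} (f : G -> H) : Fobj G -> Fobj H :=
  fun S => cls (f (repr S)).

(** A commutative square
       P --p2--> X
       |p1       |g
       B --f---> C
    is a pullback in the full subcategory of pgrp cut out by [Obj]
    (universal property, uniqueness among morphisms). *)
Definition is_pullback_in (Obj : pgrp -> Prop) {P B X C : pgrp}
    (p1 : P -> B) (p2 : P -> X) (f : B -> C) (g : X -> C) : Prop :=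
  (forall p, f (p1 p) = g (p2 p)) /\
  forall (Z : pgrp) (z1 : Z -> B) (z2 : Z -> X),
    Obj Z -> hom z1 -> hom z2 -> (forall z, f (z1 z) = g (z2 z)) ->
    exists u : Z -> P, hom u /\ (forall z, p1 (u z) = z1 z) /\ (forall z, p2 (u z) = z2 z) /\
      forall v : Z -> P, hom v -> (forall z, p1 (v z) = z1 z) -> (forall z, p2 (v z) = z2 z) ->
        forall z, v z = u z.

(* A pullback in PreOrdGrp of additive maps into a group is, up to isomorphism, the subgroup
   {(b, x) | eta b = phi x} of B * X with the componentwise cone; so it suffices to show that
   (F p1, F p2) is jointly injective, hits every compatible pair, and reflects positivity.
   Since phi is surjective and X is abelian, every element of [B,B] lifts to an element of
   [P,P] lying over 0 in X, so the class of p is determined by p2 p and the class of p1 p.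
   For the cone, a compatible pair (cls (b1 - b2), x1 - x2) of differences of positives is
   split along phi into positive y1, y2 with phi yi = cls bi, using that phi is surjective
   on cones and that the cone of X is a subgroup; the lifts of (bi, yi) are positive in P. *)

From Stdlib Require Import ClassicalEpsilon ProofIrrelevance.
From Stdlib Require Import FunctionalExtensionality PropExtensionality.

Definition isGrp (G : pgrp) : Prop :=
  (forall x y z : G, add x (add y z) = add (add x y) z) /\
  (forall x : G, add zero x = x) /\
  (forall x : G, add x zero = x) /\
  (forall x : G, add (opp x) x = zero) /\
  (forall x : G, add x (opp x) = zero).

Definition additive {G H : pgrp} (f : G -> H) : Prop :=
  forall x y : G, f (add x y) = add (f x) (f y).

Lemma isPreOrdGrp_grp {G : pgrp} : isPreOrdGrp G -> isGrp G.
Proof. intros (? & ? & ? & ? & ? & _). repeat split; auto. Qed.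

Lemma isMonoAb_grp {G : pgrp} : isMonoAb G -> isGrp G.
Proof. intros [HG _]. now apply isPreOrdGrp_grp. Qed.

Section GroupLaws.
Context {G : pgrp} (HG : isGrp G).

Lemma addrA (x y z : G) : add x (add y z) = add (add x y) z.
Proof. apply HG. Qed.
Lemma add0r (x : G) : add zero x = x.
Proof. apply HG. Qed.
Lemma addr0 (x : G) : add x zero = x.
Proof. apply HG. Qed.
Lemma addNr (x : G) : add (opp x) x = zero.
Proof. apply HG. Qed.
Lemma addrN (x : G) : add x (opp x) = zero.
Proof. apply HG. Qed.

Lemma addKr (x y : G) : add (opp x) (add x y) = y.
Proof. now rewrite addrA, addNr, add0r. Qed.
Lemma addNKr (x y : G) : add x (add (opp x) y) = y.
Proof. now rewrite addrA, addrN, add0r. Qed.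
Lemma addrI (x y z : G) : add x y = add x z -> y = z.
Proof. intro e. now rewrite <- (addKr x y), e, addKr. Qed.

Lemma eq_opp_of_add0 (x y : G) : add x y = zero -> x = opp y.
Proof. intro e. now rewrite <- (addr0 x), <- (addrN y), addrA, e, add0r. Qed.
Lemma opprK (x : G) : opp (opp x) = x.
Proof. symmetry. apply eq_opp_of_add0, addrN. Qed.
Lemma oppr0 : opp (@zero G) = zero.
Proof. symmetry. apply eq_opp_of_add0, add0r. Qed.
Lemma opprD (x y : G) : opp (add x y) = add (opp y) (opp x).
Proof.
  symmetry. apply eq_opp_of_add0.
  now rewrite <- addrA, (addrA (opp x)), addNr, add0r, addNr.
Qed.

End GroupLaws.

Ltac group_simpl HG := unfold sub; repeat progress rewrite
  <-?(addrA HG), ?(addKr HG), ?(addNKr HG), ?(addNr HG), ?(addrN HG), ?(add0r HG),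
  ?(addr0 HG), ?(opprD HG), ?(opprK HG), ?(oppr0 HG).

Section Additive.
Context {G H : pgrp} (HG : isGrp G) (HH : isGrp H) {f : G -> H} (af : additive f).

Lemma raddf0 : f zero = zero.
Proof. apply (addrI HH (f zero)). now rewrite <- af, !addr0. Qed.
Lemma raddfN (x : G) : f (opp x) = opp (f x).
Proof. apply (eq_opp_of_add0 HH). now rewrite <- af, addNr, raddf0. Qed.
Lemma raddfB (x y : G) : f (sub x y) = sub (f x) (f y).
Proof. unfold sub. now rewrite af, raddfN. Qed.

End Additive.

Lemma commsub0 {G : pgrp} : commsub (@zero G).
Proof. now intros S h0 _ _. Qed.
Lemma commsubB {G : pgrp} (x y : G) : commsub x -> commsub y -> commsub (sub x y).
Proof. intros hx hy S h0 hB hc. apply hB; [apply hx | apply hy]; auto. Qed.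
Lemma commsub_commutator {G : pgrp} (x y : G) : commsub (sub (sub (add x y) x) y).
Proof. intros S _ _ hc. apply hc. Qed.

Section CommutatorSubgroup.
Context {G : pgrp} (HG : isGrp G).

Lemma commsubN (x : G) : commsub x -> commsub (opp x).
Proof.
  intro hx. replace (opp x) with (sub zero x) by (unfold sub; apply (add0r HG)).
  apply commsubB; [apply commsub0 | exact hx].
Qed.
Lemma commsubD (x y : G) : commsub x -> commsub y -> commsub (add x y).
Proof.
  intros hx hy. replace (add x y) with (sub x (opp y)) by (unfold sub; now rewrite (opprK HG)).
  apply commsubB; [exact hx | now apply commsubN].
Qed.
Lemma commsub_conj (g c : G) : commsub c -> commsub (add (add g c) (opp g)).
Proof.
  intro hc. replace (add (add g c) (opp g)) with (add (sub (sub (add g c) g) c) c)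
    by (group_simpl HG; reflexivity).
  apply commsubD; [apply commsub_commutator | exact hc].
Qed.

Lemma commsub_eq0 : (forall x y : G, add x y = add y x) ->
  forall x : G, commsub x -> x = zero.
Proof.
  intros addC x hx. apply (hx (fun x => x = zero)); auto.
  - intros a b -> ->. unfold sub. now rewrite (oppr0 HG), (add0r HG).
  - intros a b. rewrite (addC a b). group_simpl HG. reflexivity.
Qed.

End CommutatorSubgroup.

Lemma additive_commsub {G H : pgrp} (HG : isGrp G) (HH : isGrp H) {f : G -> H} :
  additive f -> forall x, commsub x -> commsub (f x).
Proof.
  intros af x hx. apply (hx (fun x => commsub (f x))).
  - rewrite (raddf0 HG HH af). apply commsub0.
  - intros a b ha hb. rewrite (raddfB HG HH af). now apply commsubB.
  - intros a b. rewrite !(raddfB HG HH af), af. apply commsub_commutator.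
Qed.

Lemma proj1_sig_inj {A : Type} {P : A -> Prop} (u v : sig P) : proj1_sig u = proj1_sig v -> u = v.
Proof. apply eq_sig_hprop. intros; apply proof_irrelevance. Qed.

Lemma cls_repr {G : pgrp} (S : qcar G) : cls (repr S) = S.
Proof.
  apply proj1_sig_inj. unfold repr.
  now destruct (constructive_indefinite_description _ (proj2_sig S)) as [x ->].
Qed.

Lemma cls_ind {G : pgrp} (Q : qcar G -> Prop) : (forall x, Q (cls x)) -> forall S, Q S.
Proof. intros h S. rewrite <- (cls_repr S). apply h. Qed.

Section Abelianization.
Context {G : pgrp} (HG : isGrp G).

Lemma cls_eq (x y : G) : cls x = cls y <-> commsub (sub x y).
Proof.
  split.
  - intro e. apply (f_equal (@proj1_sig _ _)) in e. simpl in e.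
    unfold abeq in e. rewrite (equal_f e y). unfold sub. rewrite (addrN HG). apply commsub0.
  - intro hxy. apply proj1_sig_inj. simpl. apply functional_extensionality. intro z.
    apply propositional_extensionality. unfold abeq. split; intro h.
    + replace (sub y z) with (add (opp (sub x y)) (sub x z)) by (group_simpl HG; reflexivity).
      apply (commsubD HG); [apply (commsubN HG) |]; assumption.
    + replace (sub x z) with (add (sub x y) (sub y z)) by (group_simpl HG; reflexivity).
      apply (commsubD HG); assumption.
Qed.

Lemma commsub_repr_cls (x : G) : commsub (sub (repr (cls x)) x).
Proof. apply cls_eq, cls_repr. Qed.

Lemma qadd_cls (x y : G) : qadd (cls x) (cls y) = cls (add x y).
Proof.
  apply cls_eq. pose proof (commsub_repr_cls x) as hx. pose proof (commsub_repr_cls y) as hy.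
  set (r := repr (cls x)) in *. set (s := repr (cls y)) in *.
  replace (sub (add r s) (add x y)) with (add (add (add r (sub s y)) (opp r)) (sub r x))
    by (group_simpl HG; reflexivity).
  apply (commsubD HG); [apply (commsub_conj HG) |]; assumption.
Qed.

Lemma qopp_cls (x : G) : qopp (cls x) = cls (opp x).
Proof.
  apply cls_eq. pose proof (commsub_repr_cls x) as hx. set (r := repr (cls x)) in *.
  replace (sub (opp r) (opp x)) with (add (add (opp r) (opp (sub r x))) (opp (opp r)))
    by (group_simpl HG; reflexivity).
  apply (commsub_conj HG), (commsubN HG), hx.
Qed.

Lemma cls_addC (x y : G) : cls (add x y) = cls (add y x).
Proof.
  apply cls_eq.
  replace (sub (add x y) (add y x)) with (sub (sub (add x y) x) y) by (group_simpl HG; reflexivity).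
  apply commsub_commutator.
Qed.

Lemma Fobj_grp : isGrp (Fobj G).
Proof.
  repeat split; simpl; unfold qzero.
  - intros S T U. revert S T U.
    refine (cls_ind _ (fun x => cls_ind _ (fun y => cls_ind _ (fun z => _)))).
    now rewrite !qadd_cls, (addrA HG).
  - apply cls_ind; intro x. now rewrite qadd_cls, (add0r HG).
  - apply cls_ind; intro x. now rewrite qadd_cls, (addr0 HG).
  - apply cls_ind; intro x. now rewrite qopp_cls, qadd_cls, (addNr HG).
  - apply cls_ind; intro x. now rewrite qopp_cls, qadd_cls, (addrN HG).
Qed.

Lemma Fobj_addC (S T : Fobj G) : add S T = add T S.
Proof.
  revert S T. refine (cls_ind _ (fun x => cls_ind _ (fun y => _))).
  simpl. rewrite !qadd_cls. apply cls_addC.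
Qed.

Lemma eta_additive : additive (eta G).
Proof. intros x y. symmetry. apply qadd_cls. Qed.

Lemma qsub_cls (x y : G) : sub (cls x : Fobj G) (cls y) = cls (sub x y).
Proof. simpl. now rewrite qopp_cls, qadd_cls. Qed.

Lemma cls_inj : (forall x y : G, add x y = add y x) ->
  forall x y : G, cls x = cls y -> x = y.
Proof.
  intros addC x y e. apply cls_eq, (commsub_eq0 HG addC) in e.
  rewrite <- (add0r HG y), <- e. group_simpl HG. reflexivity.
Qed.

End Abelianization.

Lemma qpos_cls {G : pgrp} (HG : isPreOrdGrp G) (x : G) : pos x -> qpos (cls x).
Proof.
  intro hx. exists x, zero. split; [exact hx | split; [apply HG |]].
  pose proof (isPreOrdGrp_grp HG) as gG.
  now rewrite (qopp_cls gG), (qadd_cls gG), (oppr0 gG), (addr0 gG).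
Qed.

Lemma Fmor_cls {G H : pgrp} (HG : isGrp G) (HH : isGrp H) {f : G -> H} (af : additive f) (x : G) :
  Fmor f (cls x) = cls (f x).
Proof.
  apply (cls_eq HH). rewrite <- (raddfB HG HH af).
  apply (additive_commsub HG HH af), (commsub_repr_cls HG).
Qed.

Lemma Fmor_additive {G H : pgrp} (HG : isGrp G) (HH : isGrp H) {f : G -> H} :
  additive f -> additive (Fmor f).
Proof.
  intros af. refine (cls_ind _ (fun x => cls_ind _ (fun y => _))).
  simpl. rewrite (qadd_cls HG), !(Fmor_cls HG HH af), af. symmetry. apply (qadd_cls HH).
Qed.

Lemma is_pullback_of_lift (Obj : pgrp -> Prop) {P B X C : pgrp}
    (p1 : P -> B) (p2 : P -> X) (f : B -> C) (g : X -> C) :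
  additive p1 -> additive p2 ->
  (forall p, f (p1 p) = g (p2 p)) ->
  (forall p q, p1 p = p1 q -> p2 p = p2 q -> p = q) ->
  (forall b x, f b = g x -> exists p, p1 p = b /\ p2 p = x) ->
  (forall p, pos (p1 p) -> pos (p2 p) -> pos p) ->
  is_pullback_in Obj p1 p2 f g.
Proof.
  intros ap1 ap2 hsq hinj hlift hpos. split; [exact hsq |].
  intros Z z1 z2 _ [az1 pz1] [az2 pz2] hz.
  set (u z := proj1_sig (constructive_indefinite_description _ (hlift _ _ (hz z)))).
  assert (hu : forall z, p1 (u z) = z1 z /\ p2 (u z) = z2 z)
    by (intro z; exact (proj2_sig (constructive_indefinite_description _ (hlift _ _ (hz z))))).
  exists u. repeat split; try apply hu.
  - intros z z'. apply hinj.
    + now rewrite ap1, !(proj1 (hu _)), az1.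
    + now rewrite ap2, !(proj2 (hu _)), az2.
  - intros z hzpos. destruct (hu z) as [e1 e2].
    apply hpos; [rewrite e1; apply pz1 | rewrite e2; apply pz2]; exact hzpos.
  - intros v _ hv1 hv2 z. apply hinj.
    + now rewrite hv1, (proj1 (hu z)).
    + now rewrite hv2, (proj2 (hu z)).
Qed.

Section PullbackInPreOrdGrp.
Context {B X C : pgrp} (HB : isPreOrdGrp B) (HX : isPreOrdGrp X) (HC : isGrp C)
  {f : B -> C} {g : X -> C} (af : additive f) (ag : additive g).

Definition pb_car : Type := {bx : B * X | f (fst bx) = g (snd bx)}.

Lemma pb_add_proof (u v : pb_car) :
  f (add (fst (proj1_sig u)) (fst (proj1_sig v))) = g (add (snd (proj1_sig u)) (snd (proj1_sig v))).
Proof. now rewrite af, ag, (proj2_sig u), (proj2_sig v). Qed.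

Lemma pb_zero_proof : f zero = g zero.
Proof. now rewrite (raddf0 (isPreOrdGrp_grp HB) HC af), (raddf0 (isPreOrdGrp_grp HX) HC ag). Qed.

Lemma pb_opp_proof (u : pb_car) : f (opp (fst (proj1_sig u))) = g (opp (snd (proj1_sig u))).
Proof.
  rewrite (raddfN (isPreOrdGrp_grp HB) HC af), (raddfN (isPreOrdGrp_grp HX) HC ag).
  now rewrite (proj2_sig u).
Qed.

Definition pb_obj : pgrp := {|
  car := pb_car;
  add := fun u v => exist _ (add (fst (proj1_sig u)) (fst (proj1_sig v)),
                            add (snd (proj1_sig u)) (snd (proj1_sig v))) (pb_add_proof u v);
  zero := exist _ (zero, zero) pb_zero_proof;
  opp := fun u => exist _ (opp (fst (proj1_sig u)), opp (snd (proj1_sig u))) (pb_opp_proof u);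
  pos := fun u => pos (fst (proj1_sig u)) /\ pos (snd (proj1_sig u)) |}.

Lemma pb_obj_preordgrp : isPreOrdGrp pb_obj.
Proof.
  destruct HB as (? & ? & ? & ? & ? & ? & ? & ?), HX as (? & ? & ? & ? & ? & ? & ? & ?).
  repeat split; simpl; intros;
    repeat match goal with u : pb_car |- _ => destruct u as [[? ?] ?] end; simpl in *;
    solve [apply proj1_sig_inj; simpl; f_equal; auto | intuition auto].
Qed.

Definition pb_fst (u : pb_obj) : B := fst (proj1_sig u).
Definition pb_snd (u : pb_obj) : X := snd (proj1_sig u).

Lemma pb_fst_hom : hom pb_fst.
Proof. split; [reflexivity | now intros u []]. Qed.
Lemma pb_snd_hom : hom pb_snd.
Proof. split; [reflexivity | now intros u []]. Qed.

Context {P : pgrp} (HP : isPreOrdGrp P) {p1 : P -> B} {p2 : P -> X} (hp1 : hom p1) (hp2 : hom p2)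
  (Hpb : is_pullback_in isPreOrdGrp p1 p2 f g).

Lemma pullback_lift (b : B) (x : X) : f b = g x ->
  exists p, p1 p = b /\ p2 p = x /\ (pos b -> pos x -> pos p).
Proof.
  intro e.
  destruct (proj2 Hpb _ _ _ pb_obj_preordgrp pb_fst_hom pb_snd_hom (fun u => proj2_sig u))
    as (u & hu & hu1 & hu2 & _).
  exists (u (exist _ (b, x) e)). rewrite hu1, hu2. repeat split.
  intros hb hx. now apply hu.
Qed.

(* [id] and [u \o w], where [w p = (p1 p, p2 p)], both factor [(p1, p2)] through [P]. *)
Lemma pullback_jointly_injective (p q : P) : p1 p = p1 q -> p2 p = p2 q -> p = q.
Proof.
  intros e1 e2.
  set (w p := exist (fun bx : B * X => f (fst bx) = g (snd bx)) (p1 p, p2 p) (proj1 Hpb p)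
    : pb_obj).
  assert (hw : hom w).
  { split.
    - intros x y. apply proj1_sig_inj. simpl. now rewrite (proj1 hp1), (proj1 hp2).
    - intros x hx. split; [apply hp1 | apply hp2]; exact hx. }
  destruct (proj2 Hpb _ _ _ pb_obj_preordgrp pb_fst_hom pb_snd_hom (fun u => proj2_sig u))
    as (u & hu & hu1 & hu2 & _).
  destruct (proj2 Hpb _ _ _ HP hp1 hp2 (proj1 Hpb)) as (u0 & _ & _ & _ & huniq).
  assert (hid : forall p, p = u0 p) by (apply huniq; auto; split; auto).
  assert (huw : forall p, u (w p) = u0 p).
  { apply huniq; [| intro; apply hu1 | intro; apply hu2].
    split; [intros x y; now rewrite (proj1 hw), (proj1 hu) | intros x hx; now apply hu, hw]. }
  assert (ew : w p = w q) by (apply proj1_sig_inj; simpl; now rewrite e1, e2).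
  now rewrite (hid p), (hid q), <- !huw, ew.
Qed.

End PullbackInPreOrdGrp.

Lemma pos_sub_monoab {X : pgrp} (HX : isMonoAb X) (x y : X) : pos x -> pos y -> pos (sub x y).
Proof. intros hx hy. apply HX; [exact hx | now apply HX]. Qed.

Section Admissibility.
Context {B X : pgrp} (HB : isPreOrdGrp B) (HX : isMonoAb X)
  {phi : X -> Fobj B} (Hphi : regepi phi)
  {P : pgrp} (HP : isPreOrdGrp P) {p1 : P -> B} {p2 : P -> X} (hp1 : hom p1) (hp2 : hom p2)
  (Hpb : is_pullback_in isPreOrdGrp p1 p2 (eta B) phi).

Let gB := isPreOrdGrp_grp HB.
Let gX := isMonoAb_grp HX.
Let gP := isPreOrdGrp_grp HP.
Let gFB := Fobj_grp gB.
Let addCX : forall x y : X, add x y = add y x := proj1 (proj2 HX).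
Let aphi : additive phi := proj1 (proj1 Hphi).
Let ap1 : additive p1 := proj1 hp1.
Let ap2 : additive p2 := proj1 hp2.
Let lift := pullback_lift HB (proj1 HX) gFB (eta_additive gB) aphi Hpb.
Let pinj := pullback_jointly_injective HB (proj1 HX) gFB (eta_additive gB) aphi HP hp1 hp2 Hpb.

(* A commutator [a + c - a - c] of [B] lifts to the commutator of lifts of [(a, xa)] and
   [(c, xc)], where [phi xa = cls a], [phi xc = cls c]; its [X]-component vanishes as [X] is
   abelian. *)
Lemma commsub_lift (b : B) : commsub b -> exists q, p1 q = b /\ p2 q = zero /\ commsub q.
Proof.
  intro hb. apply (hb (fun b => exists q, p1 q = b /\ p2 q = zero /\ commsub q)).
  - exists zero.
    repeat split; [apply (raddf0 gP gB ap1) | apply (raddf0 gP gX ap2) | apply commsub0].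
  - intros a c (qa & ha1 & ha2 & ha3) (qc & hc1 & hc2 & hc3). exists (sub qa qc).
    rewrite (raddfB gP gB ap1), (raddfB gP gX ap2), ha1, ha2, hc1, hc2.
    repeat split; [group_simpl gX; reflexivity | now apply commsubB].
  - intros a c.
    destruct (proj1 (proj2 Hphi) (cls a)) as [xa hxa].
    destruct (proj1 (proj2 Hphi) (cls c)) as [xc hxc].
    destruct (lift a xa (eq_sym hxa)) as (qa & ha1 & ha2 & _).
    destruct (lift c xc (eq_sym hxc)) as (qc & hc1 & hc2 & _).
    exists (sub (sub (add qa qc) qa) qc).
    rewrite !(raddfB gP gB ap1), !(raddfB gP gX ap2), ap1, ap2, ha1, ha2, hc1, hc2.
    repeat split; [rewrite (addCX xa xc); group_simpl gX; reflexivity | apply commsub_commutator].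
Qed.

Lemma cls_pullback_eq (p q : P) : p2 p = p2 q -> cls (p1 p) = cls (p1 q) -> cls p = cls q.
Proof.
  intros e2 e1. apply (cls_eq gB) in e1. apply (cls_eq gP).
  destruct (commsub_lift _ e1) as (r & hr1 & hr2 & hr).
  replace (sub p q) with r; [exact hr |]. apply pinj.
  - now rewrite hr1, (raddfB gP gB ap1).
  - rewrite hr2, (raddfB gP gX ap2), e2. unfold sub. now rewrite (addrN gX).
Qed.

Lemma Fpullback_commutes (s : Fobj P) : Fmor (eta B) (Fmor p1 s) = Fmor phi (Fmor p2 s).
Proof.
  revert s. apply cls_ind. intro p.
  rewrite (Fmor_cls gP gB ap1), (Fmor_cls gP gX ap2), (Fmor_cls gB gFB (eta_additive gB)),
    (Fmor_cls gX gFB aphi).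
  f_equal. apply Hpb.
Qed.

Lemma Fpullback_jointly_injective (s t : Fobj P) :
  Fmor p1 s = Fmor p1 t -> Fmor p2 s = Fmor p2 t -> s = t.
Proof.
  revert s t. refine (cls_ind _ (fun p => cls_ind _ (fun q => _))).
  rewrite !(Fmor_cls gP gB ap1), !(Fmor_cls gP gX ap2).
  intros e1 e2. apply cls_pullback_eq; [exact (cls_inj gX addCX _ _ e2) | exact e1].
Qed.

Lemma Fpullback_lift (c : Fobj B) (d : Fobj X) :
  Fmor (eta B) c = Fmor phi d -> exists s, Fmor p1 s = c /\ Fmor p2 s = d.
Proof.
  revert c d. refine (cls_ind _ (fun b => cls_ind _ (fun x => _))).
  rewrite (Fmor_cls gB gFB (eta_additive gB)), (Fmor_cls gX gFB aphi).
  intro e. apply (cls_inj gFB (Fobj_addC gB)) in e.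
  destruct (lift b x e) as (p & <- & <- & _).
  exists (cls p). now rewrite (Fmor_cls gP gB ap1), (Fmor_cls gP gX ap2).
Qed.

Lemma regepi_split_pos (b1 b2 : B) (w : X) :
  pos b1 -> pos w -> phi w = cls (sub b1 b2) ->
  exists y1 y2, pos y1 /\ pos y2 /\ phi y1 = cls b1 /\ phi y2 = cls b2 /\ w = sub y1 y2.
Proof.
  intros hb1 hw ew.
  destruct (proj2 (proj2 Hphi) (cls b1) (qpos_cls HB b1 hb1)) as (y1 & hy1 & ey1).
  exists y1, (sub y1 w). repeat split; try apply (pos_sub_monoab HX); auto.
  - rewrite (raddfB gX gFB aphi), ey1, ew, (qsub_cls gB).
    group_simpl gB. now rewrite (addrA gB), (cls_addC gB), (addKr gB).
  - group_simpl gX. now rewrite (addCX w), (addNKr gX).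
Qed.

Lemma Fpullback_reflects_pos (s : Fobj P) : qpos (Fmor p1 s) -> qpos (Fmor p2 s) -> qpos s.
Proof.
  revert s. refine (cls_ind (G:=P) _ (fun p => _)). unfold qpos.
  intros (b1 & b2 & hb1 & hb2 & e1) (x1 & x2 & hx1 & hx2 & e2).
  rewrite (Fmor_cls gP gB ap1), (qopp_cls gB), (qadd_cls gB) in e1.
  rewrite (Fmor_cls gP gX ap2), (qopp_cls gX), (qadd_cls gX) in e2.
  apply (cls_inj gX addCX) in e2.
  assert (ew : phi (p2 p) = cls (sub b1 b2)) by (rewrite <- (proj1 Hpb p); exact e1).
  destruct (regepi_split_pos b1 b2 (p2 p) hb1) as (y1 & y2 & hy1 & hy2 & ey1 & ey2 & ep2);
    [rewrite e2; now apply (pos_sub_monoab HX) | exact ew |].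
  destruct (lift b1 y1 (eq_sym ey1)) as (q1 & hq11 & hq12 & hq1).
  destruct (lift b2 y2 (eq_sym ey2)) as (q2 & hq21 & hq22 & hq2).
  exists q1, q2. repeat split; auto.
  rewrite (qopp_cls gP), (qadd_cls gP). apply cls_pullback_eq.
  - now rewrite ep2, ap2, (raddfN gP gX ap2), hq12, hq22.
  - now rewrite e1, ap1, (raddfN gP gB ap1), hq11, hq21.
Qed.

End Admissibility.

Theorem corollary5p5 :
  forall (B X : pgrp) (phi : X -> Fobj B),
    isPreOrdGrp B -> isMonoAb X -> regepi phi ->
    forall (P : pgrp) (p1 : P -> B) (p2 : P -> X),
      isPreOrdGrp P -> hom p1 -> hom p2 ->
      is_pullback_in isPreOrdGrp p1 p2 (eta B) phi ->
      is_pullback_in isMonoAb (Fmor p1) (Fmor p2) (Fmor (eta B)) (Fmor phi).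
Proof.
  intros B X phi HB HX Hphi P p1 p2 HP hp1 hp2 Hpb.
  apply is_pullback_of_lift.
  - exact (Fmor_additive (isPreOrdGrp_grp HP) (isPreOrdGrp_grp HB) (proj1 hp1)).
  - exact (Fmor_additive (isPreOrdGrp_grp HP) (isMonoAb_grp HX) (proj1 hp2)).
  - exact (Fpullback_commutes HB HX Hphi HP hp1 hp2 Hpb).
  - exact (Fpullback_jointly_injective HB HX Hphi HP hp1 hp2 Hpb).
  - exact (Fpullback_lift HB HX Hphi HP hp1 hp2 Hpb).
  - exact (Fpullback_reflects_pos HB HX Hphi HP hp1 hp2 Hpb).
Qed.
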